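(* Let $\mathbb{R}^{2n}$ have coordinates $(x_1,y_1,x_2,y_2,\dots,x_n,y_n)$. Consider symplectic forms $\omega_1 = \sum_{i=1}^n f_i(x_i,y_i)\,dx_i\wedge dy_i$ and $\omega_2 = \sum_{i=1}^n g_i(x_i,y_i)\,dx_i\wedge dy_i$, where $f_i,g_i:\mathbb{R}^2\to\mathbb{R}$ are smooth and nowhere vanishing. Suppose $\varphi = (\varphi^1,\dots,\varphi^{2n}) \in \operatorname{Symp}(\mathbb{R}^{2n},\omega_{\mathrm{std}})$ satisfies $\varphi^*\omega_1 = \omega_2$. Then for every point $x \in \mathbb{R}^{2n}$, the multisets $\{f_i(\varphi^{2i-1}(x),\varphi^{2i}(x)) : 1\le i\le n\}$ and $\{g_i(x_i,y_i) : 1\le i\le n\}$ coincide (counted with multiplicity).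
   Context: $\omega_{\mathrm{std}} = \sum_{i=1}^n dx_i\wedge dy_i$ in these coordinates. $\operatorname{Symp}(\mathbb{R}^{2n},\omega_{\mathrm{std}})$ is the set of diffeomorphisms $\varphi$ of $\mathbb{R}^{2n}$ with $\varphi^*\omega_{\mathrm{std}} = \omega_{\mathrm{std}}$, where $(\varphi^*\omega)(x)(v,w) = \omega(\varphi(x))(d\varphi_x v, d\varphi_x w)$. *)

From HB Require Import structures.
From mathcomp Require Import all_boot all_order all_algebra.
From mathcomp Require Import all_classical all_reals all_analysis.
Set Implicit Arguments. Unset Strict Implicit. Unset Printing Implicit Defensive.
Import Order.TTheory GRing.Theory Num.Theory.
Import numFieldNormedType.Exports.
Local Open Scope ring_scope.

Section Defs.
Variable R : realType.

Definition rcoord (m : nat) (j : 'I_m) (v : 'rV[R]_m) : R := v ord0 j.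

Definition ebasis (m : nat) (j : 'I_m) : 'rV[R]_m := \row_k (k == j)%:R.

Fixpoint iter_partial (m : nat) (js : seq 'I_m) (f : 'rV[R]_m -> R)
  : 'rV[R]_m -> R :=
  match js with
  | [::] => f
  | j :: js' => fun x => derive (iter_partial js' f) x (ebasis j)
  end.

Definition smooth (m : nat) (f : 'rV[R]_m -> R) : Prop :=
  forall js : seq 'I_m,
    continuous (iter_partial js f) /\
    (forall (j : 'I_m) (x : 'rV[R]_m), derivable (iter_partial js f) x (ebasis j)).

Definition smooth_map (m p : nat) (F : 'rV[R]_m -> 'rV[R]_p) : Prop :=
  forall k : 'I_p, smooth (fun x => rcoord k (F x)).

Definition smooth2 (h : R -> R -> R) : Prop :=
  smooth (fun p : 'rV[R]_2 => h (p ord0 ord0) (p ord0 (Ordinal (isT : (1 < 2)%N)))).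

Definition diffeomorphism (m : nat) (F : 'rV[R]_m -> 'rV[R]_m) : Prop :=
  smooth_map F /\
  exists G : 'rV[R]_m -> 'rV[R]_m, smooth_map G /\ cancel F G /\ cancel G F.

(* 2-forms on R^m: at each point a (bilinear) map of two tangent vectors *)
Definition two_form (m : nat) := 'rV[R]_m -> 'rV[R]_m -> 'rV[R]_m -> R.

Definition pullback (m : nat) (F : 'rV[R]_m -> 'rV[R]_m) (w : two_form m)
  : two_form m :=
  fun x v v' => w (F x) (derive F x v) (derive F x v').

End Defs.

(* coordinates (x_1,y_1,...,x_n,y_n) on R^{2n}: with 0-based i : 'I_n,
   x_{i+1} is index 2i and y_{i+1} is index 2i+1 *)
Lemma xidx_lt (n : nat) (i : 'I_n) : (2 * i < 2 * n)%N.
Proof. by rewrite ltn_pmul2l // ltn_ord. Qed.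

Lemma yidx_lt (n : nat) (i : 'I_n) : (2 * i + 1 < 2 * n)%N.
Proof.
rewrite addn1.
have : (2 * i.+1 <= 2 * n)%N by rewrite leq_pmul2l.
by rewrite mulnS add2n.
Qed.

Definition xidx (n : nat) (i : 'I_n) : 'I_(2 * n) := Ordinal (xidx_lt i).
Definition yidx (n : nat) (i : 'I_n) : 'I_(2 * n) := Ordinal (yidx_lt i).

Definition diag_form (R : realType) (n : nat) (h : 'I_n -> 'rV[R]_(2 * n) -> R)
  : two_form R (2 * n) :=
  fun p v w => \sum_(i < n) h i p *
      (rcoord (xidx i) v * rcoord (yidx i) w - rcoord (yidx i) v * rcoord (xidx i) w).

Definition omega_std (R : realType) (n : nat) : two_form R (2 * n) :=
  diag_form (fun _ _ => 1).

Definition split_form (R : realType) (n : nat) (f : 'I_n -> R -> R -> R)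
  : two_form R (2 * n) :=
  diag_form (fun i p => f i (rcoord (xidx i) p) (rcoord (yidx i) p)).

Definition symplecto (R : realType) (n : nat) (F : 'rV[R]_(2 * n) -> 'rV[R]_(2 * n))
  : Prop :=
  diffeomorphism F /\ pullback F (@omega_std R n) = @omega_std R n.

(* The statement is pointwise linear algebra.  At a point x let A be the Jacobian of phi,
   J the matrix of omega_std, and D_f = diag(f_1, f_1, ..., f_n, f_n) taken at
   phi(x), D_g likewise at x.  The hypotheses say A J A^T = J and
   A (D_f J) A^T = D_g J.  As J is invertible, so is A, and J A^T = A^-1 J;
   hence D_g = A D_f A^-1.  Similar matrices have the same characteristic
   polynomial, so the multisets of diagonal entries agree; these are the
   wanted multisets, each counted twice. *)

From HB Require Import structures.
From mathcomp Require Import all_boot all_order all_algebra.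
From mathcomp Require Import all_classical all_reals all_analysis.
From mathcomp Require Import zify.
Set Implicit Arguments. Unset Strict Implicit. Unset Printing Implicit Defensive.
Import Order.TTheory GRing.Theory Num.Theory.
Local Open Scope ring_scope.

Lemma perm_cat_self (T : eqType) (s t : seq T) :
  perm_eq (s ++ s) (t ++ t) -> perm_eq s t.
Proof.
move/permP=> st; apply/permP => a.
by apply: double_inj; rewrite -!addnn -!count_cat st.
Qed.

Section MatrixEntries.
Variables (R : pzRingType) (m : nat).
Implicit Types (a b j k : 'I_m) (A B M : 'M[R]_m) (v w : 'rV[R]_m).

Lemma mulmx_tr_entry A M B j k :
  (A *m M *m B^T) j k = (row j A *m M *m (row k B)^T) 0 0.
Proof.
have -> : (A *m M *m B^T) j k = row j (A *m M *m B^T) 0 k by rewrite [RHS]mxE.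
rewrite !row_mul !mxE.
by apply: eq_bigr => l _; rewrite !mxE.
Qed.

Lemma mul_diag_delta_mx (d : 'rV[R]_m) a b :
  diag_mx d *m delta_mx a b = d 0 a *: delta_mx a b.
Proof.
rewrite mul_diag_mx; apply/matrixP => k l; rewrite !mxE.
by case: eqP => [-> //|]; rewrite !mulr0.
Qed.

Lemma mulmx_delta_tr_entry v w a b :
  (v *m delta_mx a b *m w^T) 0 0 = v 0 a * w 0 b.
Proof.
have -> : v *m delta_mx a b = v 0 a *: delta_mx 0 b.
  apply/rowP => k; rewrite !mxE (bigD1 a) //= big1 => [|l la]; rewrite !mxE ?eqxx.
    by rewrite addr0.
  by rewrite (negbTE la) mulr0.
by rewrite -scalemxAl -rowE !mxE.
Qed.

End MatrixEntries.

Section Conjugation.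
Variables (R : comUnitRingType) (m : nat).
Implicit Types A D J : 'M[R]_m.

Lemma char_poly_conj A D : A \in unitmx ->
  char_poly (A *m D *m invmx A) = char_poly D.
Proof.
move=> uA; rewrite /char_poly.
pose pA := map_mx (@polyC R) A; pose pA' := map_mx (@polyC R) (invmx A).
have pAK : pA *m pA' = 1%:M by rewrite -map_mxM mulmxV // map_mx1.
have -> : char_poly_mx (A *m D *m invmx A) = pA *m char_poly_mx D *m pA'.
  by rewrite /char_poly_mx mulmxBr mulmxBl scalar_mxC -(mulmxA 'X%:M) pAK mulmx1 -!map_mxM.
by rewrite !det_mulmx mulrAC -det_mulmx pAK det1 mul1r.
Qed.

Lemma preserve_form_unitmx J A : J \in unitmx -> A *m J *m A^T = J -> A \in unitmx.
Proof.
move=> uJ AJ; suff /mulmx1_unit[] : A *m (J *m A^T *m invmx J) = 1%:M by [].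
by rewrite !mulmxA AJ mulmxV.
Qed.

Lemma preserve_form_conj J A D D' : J \in unitmx -> A *m J *m A^T = J ->
  A *m (D *m J) *m A^T = D' *m J -> D' = A *m D *m invmx A.
Proof.
move=> uJ AJ ADJ; have uA := preserve_form_unitmx uJ AJ.
have JAT : J *m A^T = invmx A *m J.
  by rewrite -[LHS]mul1mx -(mulVmx uA) -!mulmxA [A *m _]mulmxA AJ.
by apply: (can_inj (mulmxK uJ)); rewrite -ADJ -!mulmxA JAT.
Qed.
End Conjugation.

Section PairedCoordinates.
Variable n : nat.
Implicit Types i : 'I_n.

Lemma half_ord_subproof (k : 'I_(2 * n)) : (k./2 < n)%N.
Proof. by rewrite ltn_half_double -mul2n ltn_ord. Qed.

Definition half_ord (k : 'I_(2 * n)) : 'I_n := Ordinal (half_ord_subproof k).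

Lemma half_ord_xidx i : half_ord (xidx i) = i.
Proof. by apply: val_inj => /=; lia. Qed.

Lemma half_ord_yidx i : half_ord (yidx i) = i.
Proof. by apply: val_inj => /=; lia. Qed.

Lemma xidx_eq_yidx i i' : (xidx i == yidx i') = false.
Proof. by apply/eqP => /(congr1 val) /=; lia. Qed.

Lemma eq_xidx i i' : (xidx i == xidx i') = (i == i').
Proof. by rewrite -!val_eqE /=; apply/eqP/eqP; lia. Qed.

Lemma eq_yidx i i' : (yidx i == yidx i') = (i == i').
Proof. by rewrite -!val_eqE /=; apply/eqP/eqP; lia. Qed.

Lemma xidx_or_yidx (k : 'I_(2 * n)) : k = xidx (half_ord k) \/ k = yidx (half_ord k).
Proof.
by have := odd_double_half k; case: (odd k) => /= k_eq; [right | left];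
  apply: val_inj => /=; lia.
Qed.

End PairedCoordinates.

Section PairedMatrices.
Variables (R : comUnitRingType) (n : nat).
Implicit Types (c : 'I_n -> R) (i : 'I_n).

Definition symp_mx c : 'M[R]_(2 * n) :=
  \sum_i c i *: (delta_mx (xidx i) (yidx i) - delta_mx (yidx i) (xidx i)).

Definition std_symp_mx : 'M[R]_(2 * n) := symp_mx (fun=> 1).

Definition pair_diag_mx c : 'M[R]_(2 * n) := diag_mx (\row_k c (half_ord k)).

Lemma delta_xidx_std_symp i :
  delta_mx 0 (xidx i) *m std_symp_mx = delta_mx 0 (yidx i) :> 'rV_(2 * n).
Proof.
rewrite mulmx_sumr (bigD1 i) //= big1 => [|j ji].
  by rewrite scale1r mulmxBr !mul_delta_mx_cond eqxx xidx_eq_yidx subr0 addr0.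
by rewrite scale1r mulmxBr !mul_delta_mx_cond eq_xidx eq_sym (negbTE ji)
  xidx_eq_yidx subrr.
Qed.

Lemma delta_yidx_std_symp i :
  delta_mx 0 (yidx i) *m std_symp_mx = - delta_mx 0 (xidx i) :> 'rV_(2 * n).
Proof.
rewrite mulmx_sumr (bigD1 i) //= big1 => [|j ji].
  by rewrite scale1r mulmxBr !mul_delta_mx_cond eqxx eq_sym xidx_eq_yidx sub0r addr0.
by rewrite scale1r mulmxBr !mul_delta_mx_cond eq_yidx eq_sym xidx_eq_yidx
  eq_sym (negbTE ji) subrr.
Qed.

Lemma std_symp_mx_sqr : std_symp_mx *m std_symp_mx = - 1%:M.
Proof.
apply/row_matrixP => k; rewrite !rowE mulmxA mulmxN mulmx1.
by case: (xidx_or_yidx k) => ->;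
  rewrite ?delta_xidx_std_symp ?delta_yidx_std_symp ?mulNmx ?delta_xidx_std_symp ?opprK.
Qed.

Lemma std_symp_mx_unit : std_symp_mx \in unitmx.
Proof.
have /mulmx1_unit[] // : std_symp_mx *m - std_symp_mx = 1%:M.
by rewrite mulmxN std_symp_mx_sqr opprK.
Qed.

Lemma symp_mx_diag c : symp_mx c = pair_diag_mx c *m std_symp_mx.
Proof.
rewrite mulmx_sumr; apply: eq_bigr => i _.
by rewrite scale1r mulmxBr !mul_diag_delta_mx !mxE half_ord_xidx half_ord_yidx scalerBr.
Qed.

Lemma char_poly_pair_diag c (s := [seq c i | i <- enum 'I_n]) :
  char_poly (pair_diag_mx c) = \prod_(a <- s ++ s) ('X - a%:P).
Proof.
rewrite char_poly_trig ?diag_mx_is_trig // big_cat /= !big_map -big_split /=.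
rewrite -enumT big_enum (partition_big (@half_ord n) predT) //=.
apply: eq_big => // i _.
rewrite (bigD1 (xidx i)) ?half_ord_xidx //= (bigD1 (yidx i)) /=; last first.
  by rewrite half_ord_yidx eqxx eq_sym xidx_eq_yidx.
rewrite big1 => [|k /andP[/andP[/eqP ki not_x] not_y]]; last first.
  by subst i; case: (xidx_or_yidx k) => k_eq; [move: not_x | move: not_y];
    rewrite -k_eq eqxx.
by rewrite !mxE !eqxx !mulr1n half_ord_xidx half_ord_yidx mulr1.
Qed.

End PairedMatrices.
Arguments std_symp_mx {R n}.

Section MatrixForms.
Variable R : realType.

Definition mx_form m (M : 'rV[R]_m -> 'M[R]_m) : two_form R m :=
  fun p v w => (v *m M p *m w^T) 0 0.

Definition jacobian m (F : 'rV[R]_m -> 'rV[R]_m) (x : 'rV[R]_m) : 'M[R]_m :=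
  \matrix_(j, l) derive F x (ebasis R j) 0 l.

Lemma ebasis_delta m (j : 'I_m) : ebasis R j = delta_mx 0 j.
Proof. by apply/rowP => k; rewrite !mxE eqxx. Qed.

Lemma row_jacobian m (F : 'rV[R]_m -> 'rV[R]_m) x j :
  row j (jacobian F x) = derive F x (ebasis R j).
Proof. by apply/rowP => l; rewrite !mxE. Qed.

Lemma pullback_mx_form m (F : 'rV[R]_m -> 'rV[R]_m) (M N : 'rV[R]_m -> 'M[R]_m) :
  pullback F (mx_form M) = mx_form N ->
  forall x, jacobian F x *m M (F x) *m (jacobian F x)^T = N x.
Proof.
move=> FMN x; apply/matrixP => j k.
rewrite mulmx_tr_entry !row_jacobian.
have := congr1 (fun w => w x (ebasis R j) (ebasis R k)) FMN.
rewrite /pullback /mx_form /= => ->.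
by rewrite !ebasis_delta -!row1 -mulmx_tr_entry mul1mx trmx1 mulmx1.
Qed.

Lemma diag_formE n (h : 'I_n -> 'rV[R]_(2 * n) -> R) :
  diag_form h = mx_form (fun p => symp_mx (fun i => h i p)).
Proof.
rewrite /diag_form /mx_form; apply/funext => p; apply/funext => v; apply/funext => w.
rewrite mulmx_sumr mulmx_suml summxE; apply: eq_bigr => i _.
by rewrite -scalemxAr -scalemxAl mxE mulmxBr mulmxBl mxE [(- _ : 'M[R]_1) 0 0]mxE
  !mulmx_delta_tr_entry.
Qed.

End MatrixForms.

Theorem theorem2p5 (R : realType) (n : nat) (f g : 'I_n -> R -> R -> R)
  (phi : 'rV[R]_(2 * n) -> 'rV[R]_(2 * n))
  (hf_smooth : forall i, smooth2 (f i)) (hg_smooth : forall i, smooth2 (g i))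
  (hf_nz : forall i a b, f i a b != 0) (hg_nz : forall i a b, g i a b != 0)
  (hphi : symplecto phi)
  (hpull : pullback phi (split_form f) = split_form g) :
  forall x : 'rV[R]_(2 * n),
    perm_eq [seq f i (rcoord (xidx i) (phi x)) (rcoord (yidx i) (phi x)) | i <- enum 'I_n]
            [seq g i (rcoord (xidx i) x) (rcoord (yidx i) x) | i <- enum 'I_n].
Proof.
move=> x; have [_ phi_std] := hphi.
rewrite /omega_std /split_form !diag_formE in phi_std hpull.
have symp_A : jacobian phi x *m std_symp_mx *m (jacobian phi x)^T = std_symp_mx.
  exact: pullback_mx_form phi_std x.
(* A bare [!] would loop: [std_symp_mx] is itself a [symp_mx]. *)
have := pullback_mx_form hpull x; rewrite 2!symp_mx_diag.
move=> /(preserve_form_conj (std_symp_mx_unit R n) symp_A) similar_fg.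
apply/perm_cat_self/prod_XsubC_eq.
rewrite -!char_poly_pair_diag similar_fg char_poly_conj //.
exact: preserve_form_unitmx (std_symp_mx_unit R n) symp_A.
Qed.
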